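(* Let $\mathcal{C}=\mathrm{CSS}(C_X,C_Z)$ be an $[[n,k,d]]_2$ CSS code with $C_X=\ker H_X$, $C_Z=\ker H_Z$, of positive dimension $k>0$, which exhibits $(c_1,c_2,\epsilon_0)$-clustering for some constants $c_1,c_2,\epsilon_0>0$. Let $$\epsilon<\frac{1}{1000}\cdot\min\left\{\frac{\epsilon_0}{2},\ \frac{c_2}{4c_1},\ \frac{d}{2c_1 n}\right\},$$ and let $\rho$ be any (possibly mixed) $n$-qubit state with $\mathrm{Tr}(\mathbf{H}\rho)\le\epsilon$, where $\mathbf{H}$ is the code Hamiltonian of $\mathcal{C}$. Then at least one of the distributions $D_X^\rho$, $D_Z^\rho$ is $(\mu,\delta)$-spread with $\mu=0.02$ and $\delta=c_2$.
   Context: All vectors are over $\mathbb{F}_2$. For $y\in\mathbb{F}_2^n$, $|y|$ is the Hamming weight; for a linear code $C$, $|y|_C=\min_{y'\in C}|y+y'|$; for sets $S,T$, $\mathrm{dis}(S,T)=\min_{s\in S,t\in T}|s-t|$. A CSS code $\mathcal{C}=\mathrm{CSS}(C_X,C_Z)$ is given by parity-check matrices $H_X\in\mathbb{F}_2^{m_X\times n}$, $H_Z\in\mathbb{F}_2^{m_Z\times n}$ with $C_X=\ker H_X$, $C_Z=\ker H_Z$, $C_X^\perp\subseteq C_Z$; the code space is $\mathrm{span}\{|y+C_X^\perp\rangle : y\in C_Z\}$ where $|S\rangle$ is the uniform superposition over $S$; dimension $k=\dim C_Z-\dim C_X^\perp$, distance $d=\min\{|y|: y\in (C_Z\setminus C_X^\perp)\cup(C_X\setminus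 C_Z^\perp)\}$. Code Hamiltonian: $\mathbf{H}=\frac12(\mathbf{H}_X+\mathbf{H}_Z)$ with $\mathbf{H}_X=\frac{1}{m_X}\sum_{y\in\mathrm{rows}(H_X)}\frac{I-X^y}{2}$, $\mathbf{H}_Z=\frac{1}{m_Z}\sum_{y\in\mathrm{rows}(H_Z)}\frac{I-Z^y}{2}$ ($X^y,Z^y$ are tensor products of Pauli operators on the support of $y$). Let $G_X^\epsilon=\{y\in\mathbb{F}_2^n:|H_Xy|\le\epsilon m_X\}$ and $G_Z^\epsilon=\{y\in\mathbb{F}_2^n:|H_Zy|\le\epsilon m_Z\}$. $\mathcal{C}$ exhibits $(c_1,c_2,\epsilon_0)$-clustering if for all $0<\epsilon<\epsilon_0$: every $y\in G_X^\epsilon$ has $|y|_{C_Z^\perp}\le c_1\epsilon n$ or $|y|_{C_Z^\perp}\ge c_2 n$, and every $y\in G_Z^\epsilon$ has $|y|_{C_X^\perp}\le c_1\epsilon n$ or $|y|_{C_X^\perp}\ge c_2 n$. For an $n$-qubit state $\rho$, $D_X^\rho$ and $D_Z^\rho$ denote the distributions on $\mathbb{F}_2^n$ obtained by measuring all qubits of $\rho$ in the $X$, resp. $Z$, basis. A distribution $D$ on $\mathbb{F}_2^n$ is $(\mu,\delta)$-spread if there are $S_0,S_1\subseteq\mathbb{F}_2^n$ with $D(S_0)\ge\mu$, $D(S_1)\ge\mu$ and $\mathrm{dis}(S_0,S_1)\ge\delta n$. *)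

From HB Require Import structures.
From mathcomp Require Import all_boot all_order all_algebra.
From mathcomp Require Import complex.
From mathcomp Require Import reals.
Set Implicit Arguments. Unset Strict Implicit. Unset Printing Implicit Defensive.
Import Order.TTheory GRing.Theory Num.Theory.
Local Open Scope ring_scope.

Notation vec n := 'rV['F_2]_n.

Definition wt m (y : vec m) : nat := #|[set i : 'I_m | y 0 i != 0]|.

Definition dotF2 n (x y : vec n) : 'F_2 := (x *m y^T) 0 0.

(* C = ker H, with H y computed as y *m H^T *)
Definition kerC m n (H : 'M['F_2]_(m, n)) : {set vec n} :=
  [set y : vec n | y *m H^T == 0].

Definition dual n (C : {set vec n}) : {set vec n} :=
  [set y : vec n | [forall c in C, dotF2 y c == 0]].

Definition dimF2 n (C : {set vec n}) : nat :=
  \rank (\matrix_(i < #|C|) nth 0 (enum C) i).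

(* |y|_C = min_{y' in C} |y + y'|  (C nonempty in all uses) *)
Definition cwt n (C : {set vec n}) (y : vec n) : nat :=
  \big[minn/n]_(y' in C) wt (y + y').

Definition dis n (S T : {set vec n}) : nat :=
  \big[minn/n]_(s in S) \big[minn/n]_(t in T) wt (s - t).

Definition css_cond mX mZ n (HX : 'M['F_2]_(mX, n)) (HZ : 'M['F_2]_(mZ, n)) :=
  dual (kerC HX) \subset kerC HZ.

Definition css_k mX mZ n (HX : 'M['F_2]_(mX, n)) (HZ : 'M['F_2]_(mZ, n)) : nat :=
  (dimF2 (kerC HZ) - dimF2 (dual (kerC HX)))%N.

Definition css_d mX mZ n (HX : 'M['F_2]_(mX, n)) (HZ : 'M['F_2]_(mZ, n)) : nat :=
  \big[minn/n]_(y in (kerC HZ :\: dual (kerC HX)) :|: (kerC HX :\: dual (kerC HZ)))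
     wt y.

Definition Geps (R : realType) m n (H : 'M['F_2]_(m, n)) (e : R) : {set vec n} :=
  [set y : vec n | ((wt (y *m H^T))%:R <= e * m%:R)%R].

Definition clustering (R : realType) mX mZ n
    (HX : 'M['F_2]_(mX, n)) (HZ : 'M['F_2]_(mZ, n)) (c1 c2 e0 : R) : Prop :=
  forall e : R, 0 < e -> e < e0 ->
    (forall y, y \in Geps HX e ->
       ((cwt (dual (kerC HZ)) y)%:R <= c1 * e * n%:R
        \/ c2 * n%:R <= (cwt (dual (kerC HZ)) y)%:R)) /\
    (forall y, y \in Geps HZ e ->
       ((cwt (dual (kerC HX)) y)%:R <= c1 * e * n%:R
        \/ c2 * n%:R <= (cwt (dual (kerC HX)) y)%:R)).

(* |x>, x in F_2^n; an operator A is its matrix (x, x') |-> <x|A|x'>.   *)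

Definition op (R : realType) n := vec n -> vec n -> R[i].

Definition idop (R : realType) n : op R n := fun x x' => (x == x')%:R.

Definition mulop (R : realType) n (A B : op R n) : op R n :=
  fun x z => \sum_y A x y * B y z.

Definition trop (R : realType) n (A : op R n) : R[i] := \sum_x A x x.

Definition signF2 (R : realType) (b : 'F_2) : R[i] := if b == 0 then 1 else -1.

(* X^y |x'> = |x' + y>  ;  Z^y |x'> = (-1)^{y.x'} |x'> *)
Definition Xop (R : realType) n (y : vec n) : op R n :=
  fun x x' => (x == x' + y)%:R.
Definition Zop (R : realType) n (y : vec n) : op R n :=
  fun x x' => (x == x')%:R * signF2 R (dotF2 y x').

Definition HamX (R : realType) mX n (HX : 'M['F_2]_(mX, n)) : op R n :=
  fun x x' => (mX%:R)^-1 * \sum_(i < mX) ((idop R x x' - Xop R (row i HX) x x') / 2%:R).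
Definition HamZ (R : realType) mZ n (HZ : 'M['F_2]_(mZ, n)) : op R n :=
  fun x x' => (mZ%:R)^-1 * \sum_(i < mZ) ((idop R x x' - Zop R (row i HZ) x x') / 2%:R).

Definition code_ham (R : realType) mX mZ n
    (HX : 'M['F_2]_(mX, n)) (HZ : 'M['F_2]_(mZ, n)) : op R n :=
  fun x x' => (HamX R HX x x' + HamZ R HZ x x') / 2%:R.

Definition is_state (R : realType) n (rho : op R n) : Prop :=
  (forall v : vec n -> R[i], 0 <= \sum_x \sum_x' (v x)^* * rho x x' * v x')
  /\ trop rho = 1.

(* X-basis vector |y^> = H^{(x)n}|y>, components <x|y^> = (-1)^{x.y}/sqrt(2^n) *)
Definition xket (R : realType) n (y : vec n) : vec n -> R[i] :=
  fun x => signF2 R (dotF2 x y) / sqrtC (2%:R ^+ n).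

Definition DZ (R : realType) n (rho : op R n) : vec n -> R[i] := fun y => rho y y.
Definition DX (R : realType) n (rho : op R n) : vec n -> R[i] :=
  fun y => \sum_x \sum_x' (xket R y x)^* * rho x x' * xket R y x'.

Definition prob (R : realType) n (D : vec n -> R[i]) (S : {set vec n}) : R[i] :=
  \sum_(y in S) D y.

Definition spread (R : realType) n (D : vec n -> R[i]) (mu delta : R) : Prop :=
  exists S0 S1 : {set vec n},
    (mu%:C)%C <= prob D S0 /\ (mu%:C)%C <= prob D S1 /\ delta * n%:R <= (dis S0 S1)%:R.

(* Markov's inequality turns the energy bound into: 49/50 of the mass of D_Z
   (resp. D_X) sits on vectors violating few Z-checks (resp. X-checks). By
   clustering, two such vectors are either close or far modulo stabilizers, so if
   neither distribution is spread, a single cluster carries mass > 24/25; its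
   diameter is below the distance, so two of its members with the same syndrome
   differ by a stabilizer. Correcting to the cluster and reading off a logical
   operator gives a Z-basis observable that is +1 on the Z-cluster and an X-basis
   observable that is +1 on the X-cluster. The two logicals anticommute, which
   caps the sum of their expectations at 17/12 < 2 (24/25) - 1 + 2 (24/25) - 1. *)

From mathcomp Require Import all_boot all_order all_algebra.
From mathcomp Require Import complex.
From mathcomp Require Import reals.
From mathcomp Require Import ring lra.
From Stdlib Require Import Classical_Prop.
Import Order.TTheory GRing.Theory Num.Theory.
Local Open Scope ring_scope.
Set Implicit Arguments. Unset Strict Implicit. Unset Printing Implicit Defensive.

Lemma F2_cases (x : 'F_2) : x = 0 \/ x = 1.
Proof. by case: x => -[|[|m]] Hm; [left|right|]; try exact/val_inj. Qed.

Lemma oppF2 (x : 'F_2) : - x = x.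
Proof. by case: (F2_cases x) => ->; [rewrite oppr0 | apply/val_inj]. Qed.

Section CharTwo.
Variable n : nat.
Implicit Types a b : vec n.

Lemma oppv_F2 a : - a = a.
Proof. by apply/matrixP => i j; rewrite !mxE oppF2. Qed.

Lemma subv_F2 a b : a - b = a + b.
Proof. by rewrite oppv_F2. Qed.

Lemma addvv_F2 a : a + a = 0.
Proof. by rewrite -{2}(oppv_F2 a) subrr. Qed.

Lemma addv_eq0_F2 a b : (a + b == 0) = (b == a).
Proof. by rewrite addr_eq0 oppv_F2. Qed.

Lemma card_vec : #|{: vec n}| = (2 ^ n)%N.
Proof. by rewrite card_mx card_Fp // mul1n. Qed.

End CharTwo.

Section Sign.
Variable R : realType.

Definition sgn2 (b : 'F_2) : R := if b == 0 then 1 else -1.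

Lemma sgn2_0 : sgn2 0 = 1. Proof. by rewrite /sgn2 eqxx. Qed.
Lemma sgn2_1 : sgn2 1 = -1. Proof. by []. Qed.

Lemma sgn2D a b : sgn2 (a + b) = sgn2 a * sgn2 b.
Proof.
case: (F2_cases a) => ->; case: (F2_cases b) => ->;
  rewrite ?add0r ?addr0 ?sgn2_0 ?sgn2_1 ?mul1r ?mulr1 //.
by rewrite (_ : 1 + 1 = 0); [rewrite sgn2_0 mulrNN mulr1 | exact/val_inj].
Qed.

Lemma sgn2_sqr a : sgn2 a * sgn2 a = 1.
Proof. by rewrite -sgn2D -{1}(oppF2 a) addNr sgn2_0. Qed.

Lemma sgn2_geN1 a : -1 <= sgn2 a.
Proof. by case: (F2_cases a) => ->; rewrite ?sgn2_0 ?sgn2_1 //; lra. Qed.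

Lemma half_1subsgn2 a : (1 - sgn2 a) / 2%:R = (a != 0)%:R.
Proof.
case: (F2_cases a) => ->; rewrite ?sgn2_0 ?sgn2_1 ?subrr ?mul0r ?eqxx //.
by rewrite opprK -mulr2n divff // pnatr_eq0.
Qed.

Lemma signF2E a : signF2 R a = (sgn2 a)%:C%C.
Proof. by rewrite /signF2 /sgn2; case: (a == 0); [rewrite rmorph1 | rewrite rmorphN1]. Qed.

End Sign.

Section Dot.
Variable n : nat.
Implicit Types x y z : vec n.

Lemma dotF2C x y : dotF2 x y = dotF2 y x.
Proof. by rewrite /dotF2 -{1}(trmxK x) -trmx_mul mxE. Qed.

Lemma dotF2Dl x y z : dotF2 (x + y) z = dotF2 x z + dotF2 y z.
Proof. by rewrite /dotF2 mulmxDl mxE. Qed.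

Lemma dotF2Dr x y z : dotF2 z (x + y) = dotF2 z x + dotF2 z y.
Proof. by rewrite dotF2C dotF2Dl !(dotF2C z). Qed.

Lemma dotF20l x : dotF2 0 x = 0.
Proof. by rewrite /dotF2 mul0mx mxE. Qed.

Lemma dotF20r x : dotF2 x 0 = 0.
Proof. by rewrite dotF2C dotF20l. Qed.

Lemma dotF2E x y : dotF2 x y = \sum_j x 0 j * y 0 j.
Proof. by rewrite /dotF2 mxE; apply: eq_bigr => j _; rewrite mxE. Qed.

Lemma dotF2_delta (j : 'I_n) x : dotF2 (delta_mx 0 j) x = x 0 j.
Proof.
rewrite dotF2E (bigD1 j) //= big1 ?addr0 ?mxE ?eqxx ?mul1r //.
by move=> i /negbTE Hi; rewrite mxE Hi andbF mul0r.
Qed.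

Lemma syndrome_dot m (H : 'M['F_2]_(m, n)) x i : (x *m H^T) 0 i = dotF2 (row i H) x.
Proof. by rewrite mxE dotF2E; apply: eq_bigr => j _; rewrite !mxE mulrC. Qed.

Lemma sum_sgn2_dot (R : realType) a :
  \sum_(s : vec n) sgn2 R (dotF2 s a) = (a == 0)%:R * (2 ^ n)%:R.
Proof.
have [->|a_neq0] := eqVneq a 0.
  rewrite mul1r (eq_bigr (fun _ => 1)) => [|s _]; last by rewrite dotF20r sgn2_0.
  by rewrite sumr_const card_vec.
rewrite mul0r.
have [j aj] : exists j, a 0 j != 0.
  apply/existsP; apply: contraR a_neq0 => /existsPn aj0; apply/eqP/matrixP => i k.
  by rewrite ord1 mxE; apply/eqP; move: (aj0 k); rewrite negbK.
have aj1 : a 0 j = 1 by case: (F2_cases (a 0 j)) aj => ->; rewrite ?eqxx.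
set S := \sum_s _; have : S = - S.
  rewrite {1}/S (reindex_inj (addrI (delta_mx 0 j))) /= -sumrN.
  by apply: eq_bigr => s _; rewrite dotF2Dl dotF2_delta aj1 sgn2D sgn2_1 mulN1r.
move/eqP; rewrite -subr_eq0 opprK -mulr2n mulrn_eq0 /= => /eqP //.
Qed.

End Dot.

Section Weight.
Variable n : nat.
Implicit Types a b y : vec n.

Lemma wt_le y : (wt y <= n)%N.
Proof. by rewrite /wt; apply: leq_trans (max_card _) _; rewrite card_ord. Qed.

Lemma wtD_le a b : (wt (a + b) <= wt a + wt b)%N.
Proof.
rewrite /wt; apply: leq_trans (leq_card_setU _ _).
apply: subset_leq_card; apply/subsetP => i; rewrite !inE mxE.
by apply: contraR; rewrite negb_or !negbK => /andP [/eqP -> /eqP ->]; rewrite addr0.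
Qed.

Lemma wt0 : wt (0 : vec n) = 0%N.
Proof. by apply/eqP; rewrite cards_eq0; apply/eqP/setP => i; rewrite !inE mxE eqxx. Qed.

Lemma wt_syndromeE (R : realType) m (H : 'M['F_2]_(m, n)) y :
  (wt (y *m H^T))%:R = \sum_(i < m) (1 - sgn2 R (dotF2 (row i H) y)) / 2%:R :> R.
Proof.
rewrite /wt -sum1_card natr_sum big_mkcond /=.
by apply: eq_bigr => i _; rewrite half_1subsgn2 inE syndrome_dot; case: (_ != 0).
Qed.

End Weight.

Lemma bigminn_le_cond (I : finType) (P : pred I) (F : I -> nat) x0 j :
  P j -> (\big[minn/x0]_(i | P i) F i <= F j)%N.
Proof. by move=> Pj; rewrite -minEnat; exact: (bigmin_le_cond x0 F Pj). Qed.

Lemma bigminn_le_id (I : finType) (P : pred I) (F : I -> nat) x0 :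
  (\big[minn/x0]_(i | P i) F i <= x0)%N.
Proof. by elim/big_rec: _ => // i v _ v_le; rewrite geq_min v_le orbT. Qed.

Lemma bigminn_attained (I : finType) (P : pred I) (F : I -> nat) x0 j :
  P j -> (forall i, P i -> F i <= x0)%N ->
  exists2 i, P i & \big[minn/x0]_(i | P i) F i = F i.
Proof.
move=> Pj Fx0; rewrite -minEnat (bigmin_eq_arg x0 j P F Pj Fx0).
by case: arg_minP => // i Pi _; exists i.
Qed.

Section CosetWeight.
Variables (n : nat) (C : {set vec n}).
Hypothesis C0 : 0 \in C.
Hypothesis CD : forall a b, a \in C -> b \in C -> a + b \in C.
Implicit Types a b y : vec n.

Lemma cwt_le y c : c \in C -> (cwt C y <= wt (y + c))%N.
Proof. exact: bigminn_le_cond. Qed.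

Lemma cwt_attained y : exists2 c, c \in C & cwt C y = wt (y + c).
Proof. by apply: (bigminn_attained (j := 0)) => // i _; apply: wt_le. Qed.

Lemma cwt_le_wt y : (cwt C y <= wt y)%N.
Proof. by have := cwt_le y C0; rewrite addr0. Qed.

Lemma cwt0 : cwt C 0 = 0%N.
Proof. by apply/eqP; rewrite -leqn0; apply: leq_trans (cwt_le_wt 0) _; rewrite wt0. Qed.

Lemma cwtD_le a b : (cwt C (a + b) <= cwt C a + cwt C b)%N.
Proof.
case: (cwt_attained a) => ca Ca ->; case: (cwt_attained b) => cb Cb ->.
apply: leq_trans (cwt_le (a + b) (CD Ca Cb)) _.
by rewrite addrACA; exact: wtD_le.
Qed.

Lemma cwt_triangle a b c : (cwt C (a + b) <= cwt C (a + c) + cwt C (c + b))%N.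
Proof.
have -> : a + b = (a + c) + (c + b) by rewrite addrA -(addrA a) addvv_F2 addr0.
exact: cwtD_le.
Qed.

Lemma cwt_lt_dist (R : realType) (Cl : {set vec n}) (d : nat) (r : R) c :
  C \subset Cl -> (forall a b, a \in Cl -> b \in Cl -> a + b \in Cl) ->
  (forall c, c \in Cl -> c \notin C -> (d <= wt c)%N) ->
  r < d%:R -> c \in Cl -> (cwt C c)%:R <= r -> c \in C.
Proof.
move=> CCl ClD dist r_lt_d Clc cwt_le_r; apply/negPn/negP => Cnc.
case: (cwt_attained c) cwt_le_r => t Ct ->.
have Cnct : c + t \notin C.
  by apply: contra Cnc => Cct; rewrite -[c](addrK t) subv_F2 CD.
have := dist _ (ClD _ _ Clc (subsetP CCl _ Ct)) Cnct; rewrite -(ler_nat R) => d_le.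
by move=> le_r; have := lt_le_trans (le_lt_trans le_r r_lt_d) d_le; rewrite ltxx.
Qed.

End CosetWeight.

Section DualKernel.
Variable n : nat.
Implicit Types (C : {set vec n}) (a b : vec n).

Lemma dual0 C : 0 \in dual C.
Proof. by rewrite inE; apply/forall_inP => c _; rewrite dotF20l. Qed.

Lemma dualD C a b : a \in dual C -> b \in dual C -> a + b \in dual C.
Proof.
rewrite !inE => /forall_inP Ha /forall_inP Hb; apply/forall_inP => c Cc.
by rewrite dotF2Dl (eqP (Ha _ Cc)) (eqP (Hb _ Cc)) addr0.
Qed.

Lemma dualP C a c : a \in dual C -> c \in C -> dotF2 a c = 0.
Proof. by rewrite inE => /forall_inP H Cc; apply/eqP/H. Qed.

Lemma kerCP m (H : 'M['F_2]_(m, n)) y : (y \in kerC H) = (y *m H^T == 0).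
Proof. by rewrite inE. Qed.

Lemma kerCD m (H : 'M['F_2]_(m, n)) a b : a \in kerC H -> b \in kerC H -> a + b \in kerC H.
Proof. by rewrite !kerCP mulmxDl => /eqP -> /eqP ->; rewrite addr0. Qed.

Lemma kerC_syndrome m (H : 'M['F_2]_(m, n)) a b :
  (a + b \in kerC H) = (a *m H^T == b *m H^T).
Proof. by rewrite kerCP mulmxDl addv_eq0_F2 eq_sym. Qed.

End DualKernel.

Section ComplexReal.
Variable R : realType.

Lemma Re_sum (I : finType) (P : pred I) (F : I -> R[i]) :
  complex.Re (\sum_(i | P i) F i) = \sum_(i | P i) complex.Re (F i).
Proof.
by apply: (big_rec2 (fun a b => complex.Re a = b)) => // i y1 y2 _ <-; case: (F i) y1 => a b [c d].
Qed.

Lemma Re_ge0 (z : R[i]) : 0 <= z -> 0 <= complex.Re z.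
Proof. by rewrite lecE => /andP []. Qed.

Lemma Re_le (z w : R[i]) : z <= w -> complex.Re z <= complex.Re w.
Proof. by rewrite lecE => /andP []. Qed.

Lemma ge0_complexE (z : R[i]) : 0 <= z -> z = ((complex.Re z)%:C)%C.
Proof. by move=> z_ge0; rewrite RRe_real // ger0_real. Qed.

End ComplexReal.

Lemma sum_indicator (T : pzRingType) n (f : vec n -> T) a : \sum_x (x == a)%:R * f x = f a.
Proof. by rewrite (bigD1 a) //= big1 ?addr0 ?eqxx ?mul1r // => x /negbTE ->; rewrite mul0r. Qed.

Lemma sum_sum_indicator (T : comPzRingType) n (F : vec n -> vec n -> T) y :
  \sum_x \sum_x' (x == y)%:R * F x x' * (x' == y)%:R = F y y.
Proof.
rewrite -(sum_indicator (fun x => F x y) y); apply: eq_bigr => x _.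
by rewrite -(sum_indicator (F x) y) mulr_sumr; apply: eq_bigr => x' _; ring.
Qed.

Section State.
Variables (R : realType) (n : nat) (rho : op R n).
Hypothesis rho_state : is_state rho.
Local Notation N := ((2 ^ n)%:R : R).

Definition re_op (x x' : vec n) : R := complex.Re (rho x x').
Local Notation rr := re_op.

(* Real forms of [DZ rho] and [DX rho], see [DZE] and [DXE]. *)
Definition pZ (y : vec n) : R := rr y y.
Definition pX (s : vec n) : R :=
  N^-1 * \sum_x \sum_x' sgn2 R (dotF2 x s) * sgn2 R (dotF2 x' s) * rr x x'.

Lemma state_quad_ge0 (b : vec n -> R) : 0 <= \sum_x \sum_x' b x * b x' * rr x x'.
Proof.
have := Re_ge0 (rho_state.1 (fun x => (b x)%:C%C)); rewrite Re_sum.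
rewrite (eq_bigr (fun x => \sum_x' b x * b x' * rr x x')) // => x _.
rewrite Re_sum; apply: eq_bigr => x' _.
by rewrite conj_Creal ?complex_real // /rr; case: (rho x x') => a c /=; ring.
Qed.

Lemma state_diag_ge0 y : 0 <= rho y y.
Proof.
have := rho_state.1 (fun x => (x == y)%:R).
under eq_bigr do under eq_bigr do rewrite conjC_nat.
by rewrite sum_sum_indicator.
Qed.

Lemma pZ_ge0 y : 0 <= pZ y.
Proof. exact/Re_ge0/state_diag_ge0. Qed.

Lemma sum_pZ : \sum_y pZ y = 1.
Proof. by rewrite /pZ /rr -Re_sum; have := rho_state.2; rewrite /trop => ->. Qed.

Lemma DZE y : DZ rho y = ((pZ y)%:C)%C.
Proof. exact: (ge0_complexE (state_diag_ge0 y)). Qed.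

Lemma pX_ge0 s : 0 <= pX s.
Proof.
apply: mulr_ge0; first by rewrite invr_ge0 ler0n.
exact: (state_quad_ge0 (fun x => sgn2 R (dotF2 x s))).
Qed.

Lemma xket_term s x x' :
  (xket R s x)^* * rho x x' * xket R s x' =
  ((sgn2 R (dotF2 x s) * sgn2 R (dotF2 x' s) / N)%:C)%C * rho x x'.
Proof.
rewrite /xket !signF2E; set r := sqrtC _.
have r_real : r \is Num.real by apply: ger0_real; rewrite sqrtC_ge0 exprn_ge0 // ler0n.
have rr2 : r * r = N%:C%C by rewrite -expr2 sqrtCK natrX rmorphXn rmorph_nat.
have conj_sgn a : (((sgn2 R a)%:C)%C / r)^* = ((sgn2 R a)%:C)%C / r.
  by apply: conj_Creal; rewrite rpredM ?rpredV // complex_real.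
have -> : ((sgn2 R (dotF2 x s) * sgn2 R (dotF2 x' s) / N)%:C)%C =
    ((sgn2 R (dotF2 x s))%:C)%C * ((sgn2 R (dotF2 x' s))%:C)%C / (r * r).
  by rewrite rr2 !rmorphM fmorphV.
by rewrite conj_sgn invfM; ring.
Qed.

Lemma DXE s : DX rho s = ((pX s)%:C)%C.
Proof.
have DX_ge0 : 0 <= DX rho s by exact: rho_state.1.
rewrite {1}(ge0_complexE DX_ge0); congr (_%:C)%C.
rewrite /DX /pX Re_sum mulr_sumr; apply: eq_bigr => x _.
rewrite Re_sum mulr_sumr; apply: eq_bigr => x' _.
by rewrite xket_term /rr; case: (rho x x') => u w /=; ring.
Qed.

Lemma pX_fourier h : \sum_s pX s * sgn2 R (dotF2 h s) = \sum_x rr x (x + h).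
Proof.
transitivity (\sum_s \sum_x \sum_x' N^-1 * (rr x x' * sgn2 R (dotF2 s (x + x' + h)))).
  apply: eq_bigr => s _; rewrite /pX -mulrA mulr_suml mulr_sumr; apply: eq_bigr => x _.
  rewrite mulr_suml mulr_sumr; apply: eq_bigr => x' _.
  rewrite !dotF2Dr !sgn2D (dotF2C s x) (dotF2C s x') (dotF2C s h); ring.
rewrite exchange_big /=; apply: eq_bigr => x _; rewrite exchange_big /=.
rewrite -(sum_indicator (fun x' => rr x x') (x + h)); apply: eq_bigr => x' _.
rewrite -!mulr_sumr sum_sgn2_dot addrAC addv_eq0_F2.
have N_neq0 : N != 0 by rewrite pnatr_eq0 expn_eq0.
by rewrite mulrC -!mulrA divff // mulr1 mulrC.
Qed.

Lemma sum_pX : \sum_s pX s = 1.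
Proof.
have -> : 1 = \sum_y rr y (y + 0) by rewrite -sum_pZ; apply: eq_bigr => y _; rewrite addr0.
by rewrite -pX_fourier; apply: eq_bigr => s _; rewrite dotF20l sgn2_0 mulr1.
Qed.

End State.

Definition syndrome_energy (R : realType) n m (H : 'M['F_2]_(m, n)) (P : vec n -> R) : R :=
  m%:R^-1 * \sum_y (wt (y *m H^T))%:R * P y.

Lemma syndrome_energy_ge0 (R : realType) n m (H : 'M['F_2]_(m, n)) (P : vec n -> R) :
  (forall y, 0 <= P y) -> 0 <= syndrome_energy H P.
Proof.
move=> P_ge0; apply: mulr_ge0; first by rewrite invr_ge0 ler0n.
by apply: sumr_ge0 => y _; apply: mulr_ge0.
Qed.

Section Energy.
Variables (R : realType) (n mX mZ : nat) (HX : 'M['F_2]_(mX, n)) (HZ : 'M['F_2]_(mZ, n)).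
Variable rho : op R n.
Hypothesis rho_state : is_state rho.
Local Notation rr := (re_op rho).

Let hamXr (x y : vec n) : R :=
  mX%:R^-1 * \sum_(i < mX) (((x == y)%:R - (x == y + row i HX)%:R) / 2%:R).
Let hamZr (x y : vec n) : R :=
  mZ%:R^-1 * \sum_(i < mZ) (((x == y)%:R - (x == y)%:R * sgn2 R (dotF2 (row i HZ) y)) / 2%:R).

Lemma code_ham_real x y : code_ham R HX HZ x y = ((((hamXr x y + hamZr x y) / 2%:R))%:C)%C.
Proof.
rewrite /code_ham.
have -> : HamX R HX x y = ((hamXr x y)%:C)%C.
  rewrite /HamX /hamXr rmorphM fmorphV rmorph_nat rmorph_sum; congr (_ * _).
  by apply: eq_bigr => i _; rewrite /idop /Xop rmorphM fmorphV rmorphB !rmorph_nat.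
have -> : HamZ R HZ x y = ((hamZr x y)%:C)%C.
  rewrite /HamZ /hamZr rmorphM fmorphV rmorph_nat rmorph_sum; congr (_ * _).
  apply: eq_bigr => i _.
  by rewrite /idop /Zop rmorphM fmorphV rmorphB rmorphM !rmorph_nat signF2E.
by rewrite -rmorphD -(rmorph_nat (real_complex R) 2) -fmorphV -rmorphM.
Qed.

Lemma Z_energyE : \sum_x \sum_y hamZr x y * rr y x = syndrome_energy HZ (pZ rho).
Proof.
rewrite /syndrome_energy mulr_sumr; apply: eq_bigr => x _.
have hamZrE y : hamZr x y = (y == x)%:R * (mZ%:R^-1 * (wt (y *m HZ^T))%:R).
  rewrite /hamZr (wt_syndromeE R) eq_sym mulrCA; congr (_ * _).
  by rewrite mulr_sumr; apply: eq_bigr => i _; ring.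
under eq_bigr do rewrite hamZrE -mulrA.
by rewrite sum_indicator mulrA.
Qed.

Lemma X_check_energyE (h : vec n) :
  \sum_x \sum_y ((x == y)%:R - (x == y + h)%:R) / 2%:R * rr y x =
  \sum_s pX rho s * ((1 - sgn2 R (dotF2 h s)) / 2%:R).
Proof.
have E1 : \sum_x \sum_y (x == y)%:R * rr y x = \sum_x rr x x.
  by apply: eq_bigr => x _; under eq_bigr do rewrite eq_sym; rewrite sum_indicator.
have E2 : \sum_x \sum_y (x == y + h)%:R * rr y x = \sum_y rr y (y + h).
  by rewrite exchange_big /=; apply: eq_bigr => y _; rewrite sum_indicator.
transitivity ((\sum_x \sum_y (x == y)%:R * rr y x
               - \sum_x \sum_y (x == y + h)%:R * rr y x) / 2%:R).
  rewrite -sumrB mulr_suml; apply: eq_bigr => x _; rewrite -sumrB mulr_suml.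
  by apply: eq_bigr => y _; ring.
rewrite E1 E2 -pX_fourier.
have -> : \sum_x rr x x = \sum_s pX rho s by rewrite (sum_pX rho_state) -(sum_pZ rho_state).
by rewrite -sumrB mulr_suml; apply: eq_bigr => s _; ring.
Qed.

Lemma X_energyE : \sum_x \sum_y hamXr x y * rr y x = syndrome_energy HX (pX rho).
Proof.
transitivity (\sum_x \sum_y \sum_(i < mX)
    mX%:R^-1 * (((x == y)%:R - (x == y + row i HX)%:R) / 2%:R * rr y x)).
  apply: eq_bigr => x _; apply: eq_bigr => y _.
  by rewrite /hamXr -mulrA mulr_suml mulr_sumr.
under eq_bigr do rewrite exchange_big /=; rewrite exchange_big /=.
transitivity (\sum_(i < mX) mX%:R^-1 *
    \sum_s pX rho s * ((1 - sgn2 R (dotF2 (row i HX) s)) / 2%:R)).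
  apply: eq_bigr => i _; rewrite -X_check_energyE mulr_sumr; apply: eq_bigr => x _.
  by rewrite mulr_sumr.
rewrite -mulr_sumr exchange_big /=; congr (_ * _); apply: eq_bigr => s _.
by rewrite -mulr_sumr (wt_syndromeE R) mulrC.
Qed.

Lemma energyE : complex.Re (trop (mulop (code_ham R HX HZ) rho)) =
  (syndrome_energy HX (pX rho) + syndrome_energy HZ (pZ rho)) / 2%:R.
Proof.
rewrite /trop Re_sum -X_energyE -Z_energyE -big_split mulr_suml /=.
apply: eq_bigr => x _; rewrite /mulop Re_sum -big_split mulr_suml /=.
by apply: eq_bigr => y _; rewrite code_ham_real /rr /re_op; case: (rho y x) => u w /=; ring.
Qed.

Lemma syndrome_energies_le (eps : R) :
  trop (mulop (code_ham R HX HZ) rho) <= (eps%:C)%C ->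
  [/\ 0 <= eps, syndrome_energy HX (pX rho) <= 2%:R * eps
     & syndrome_energy HZ (pZ rho) <= 2%:R * eps].
Proof.
move/Re_le; rewrite energyE /= => energy_le.
have := syndrome_energy_ge0 HX (pX_ge0 rho_state).
have := syndrome_energy_ge0 HZ (pZ_ge0 rho_state).
by split; lra.
Qed.

End Energy.

Lemma syndrome_markov (R : realType) n m (H : 'M['F_2]_(m, n)) (P : vec n -> R) (t : R) :
  (forall y, 0 <= P y) -> \sum_y P y = 1 -> 0 < t ->
  syndrome_energy H P <= t / 50%:R ->
  49%:R / 50%:R <= \sum_(y in Geps H t) P y.
Proof.
move=> P_ge0 P_sum1 t_gt0 energy_le.
have [m0|m_gt0] := eqVneq m 0%N.
  subst m; rewrite (eq_bigl (fun _ => true)) ?P_sum1; first lra.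
  move=> y; rewrite inE; have := wt_le (y *m H^T); rewrite leqn0 => /eqP ->.
  by rewrite mulr0 lexx.
have mR : 0 < m%:R :> R by rewrite ltr0n lt0n.
set G := Geps H t; set S := \sum_(y in ~: G) P y.
have sum_split : \sum_y P y = \sum_(y in G) P y + S.
  by rewrite (bigID (mem G)) /=; congr (_ + _); apply: eq_bigl => y; rewrite ?inE.
have tail_le : S * (t * m%:R) <= \sum_y (wt (y *m H^T))%:R * P y.
  rewrite mulr_suml; apply: le_trans (_ : \sum_(y in ~: G) (wt (y *m H^T))%:R * P y <= _).
    apply: ler_sum => y; rewrite !inE -ltNge => /ltW Hy.
    by rewrite mulrC; apply: ler_wpM2r.
  rewrite [X in _ <= X](bigID (mem (~: G))) /= lerDl.
  by apply: sumr_ge0 => y _; apply: mulr_ge0.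
have : S * (t * m%:R) <= (t / 50%:R) * m%:R.
  by apply: le_trans tail_le _; rewrite -ler_pdivrMr // mulrC.
rewrite (_ : t / 50%:R * m%:R = 50%:R^-1 * (t * m%:R)); last by ring.
rewrite ler_pM2r ?mulr_gt0 // => S_le.
by move: sum_split; rewrite P_sum1; lra.
Qed.

Section NonnegSums.
Variables (R : realType) (T : finType) (P : T -> R).
Hypothesis P_ge0 : forall y, 0 <= P y.

Lemma sum_subset_le (A B : {set T}) : A \subset B -> \sum_(y in A) P y <= \sum_(y in B) P y.
Proof.
move/subsetP=> AB; rewrite [X in X <= _]big_mkcond [X in _ <= X]big_mkcond /=.
by apply: ler_sum => y _; case: ifP => [/AB -> //|_]; case: ifP.
Qed.

Lemma sum_setU_le (A B : {set T}) :
  \sum_(y in A :|: B) P y <= \sum_(y in A) P y + \sum_(y in B) P y.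
Proof.
rewrite !(big_mkcond (fun y => y \in _)) -big_split /=; apply: ler_sum => y _.
rewrite in_setU; case: (y \in A); case: (y \in B) => //=; rewrite ?addr0 ?add0r //.
by rewrite lerDl.
Qed.

End NonnegSums.

Lemma dis_ge (R : realType) n (S0 S1 : {set vec n}) (t : R) a0 b0 :
  a0 \in S0 -> b0 \in S1 ->
  (forall a b, a \in S0 -> b \in S1 -> t <= (wt (a - b))%:R) -> t <= (dis S0 S1)%:R.
Proof.
move=> S0a0 S1b0 far; rewrite /dis.
have [a S0a ->] := bigminn_attained (F := fun a => \big[minn/n]_(b in S1) wt (a - b)) S0a0
  (fun a _ => bigminn_le_id _ _ _).
have [b S1b ->] := bigminn_attained (F := fun b => wt (a - b)) S1b0 (fun b _ => wt_le _).
exact: far.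
Qed.

Lemma spread_far (R : realType) n (P : vec n -> R) (mu delta : R) (S0 S1 : {set vec n}) :
  0 < mu -> mu <= \sum_(y in S0) P y -> mu <= \sum_(y in S1) P y ->
  (forall a b, a \in S0 -> b \in S1 -> delta * n%:R <= (wt (a - b))%:R) ->
  spread (fun y => (P y)%:C%C) mu delta.
Proof.
move=> mu_gt0 S0_mass S1_mass far.
have probE S : prob (fun y => (P y)%:C%C) S = ((\sum_(y in S) P y)%:C)%C by rewrite /prob rmorph_sum.
exists S0, S1; rewrite !probE !lecR; split => //; split => //.
case: (set_0Vmem S0) => [S00|[a0 S0a0]]; first by move: S0_mass; rewrite S00 big_set0; lra.
case: (set_0Vmem S1) => [S10|[b0 S1b0]]; first by move: S1_mass; rewrite S10 big_set0; lra.
exact: (dis_ge S0a0 S1b0 far).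
Qed.

Section Cluster.
Variables (R : realType) (n m : nat) (H : 'M['F_2]_(m, n)) (C : {set vec n}).
Hypothesis C0 : 0 \in C.
Hypothesis CD : forall a b, a \in C -> b \in C -> a + b \in C.
Variables (P : vec n -> R) (c1 c2 t : R).
Hypothesis P_ge0 : forall y, 0 <= P y.
Hypothesis c1_ge0 : 0 <= c1.
Hypothesis t_ge0 : 0 <= t.
Local Notation r := (c1 * (2%:R * t) * n%:R).
Hypothesis separated : 2%:R * r < c2 * n%:R.
Hypothesis clustered : forall y, y \in Geps H (2%:R * t) ->
  (cwt C y)%:R <= r \/ c2 * n%:R <= (cwt C y)%:R.
Local Notation G := (Geps H t).

Lemma GepsD a b : a \in G -> b \in G -> a + b \in Geps H (2%:R * t).
Proof.
rewrite !inE mulmxDl => Ga Gb.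
apply: le_trans (_ : (wt (a *m H^T) + wt (b *m H^T))%:R <= _); first by rewrite ler_nat wtD_le.
by rewrite natrD -mulrA mulr_natl mulr2n; apply: lerD.
Qed.

Lemma cluster_dichotomy a b : a \in G -> b \in G ->
  (cwt C (a + b))%:R <= r \/ c2 * n%:R <= (cwt C (a + b))%:R.
Proof. by move=> Ga Gb; apply/clustered/GepsD. Qed.

Definition ball (y : vec n) : {set vec n} := [set a in G | (cwt C (y + a))%:R <= r].

Lemma ballP y a : (a \in ball y) = (a \in G) && ((cwt C (y + a))%:R <= r).
Proof. by rewrite inE. Qed.

Lemma ball_sub y : ball y \subset G.
Proof. by apply/subsetP => a; rewrite ballP => /andP []. Qed.

Lemma ball_center y : y \in G -> y \in ball y.
Proof. by move=> Gy; rewrite ballP Gy addvv_F2 cwt0 // mulr_ge0 ?mulr_ge0 ?ler0n. Qed.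

(* By the separation [2 r < c2 n], a ball cannot reach the far side of the dichotomy. *)
Lemma ball_close y a b : y \in G -> a \in ball y -> b \in ball y ->
  (cwt C (a + b))%:R <= r.
Proof.
move=> Gy; rewrite !ballP => /andP [Ga ya] /andP [Gb yb].
case: (cluster_dichotomy Ga Gb) => // far.
have : (cwt C (a + b))%:R <= r + r :> R.
  apply: le_trans (_ : (cwt C (a + y) + cwt C (y + b))%:R <= _).
    by rewrite ler_nat cwt_triangle.
  by rewrite natrD (addrC a); apply: lerD.
by move: separated far; lra.
Qed.

Lemma ball_far y a b : y \in G -> a \in ball y -> b \in G -> b \notin ball y ->
  c2 * n%:R <= (wt (a - b))%:R.
Proof.
move=> Gy; rewrite ballP => /andP [Ga ya] Gb; rewrite ballP Gb /= -ltNge => yb.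
have yb_far : c2 * n%:R <= (cwt C (y + b))%:R.
  by case: (cluster_dichotomy Gy Gb) => // near; move: yb; rewrite ltNge near.
have ab_far : c2 * n%:R <= (cwt C (a + b))%:R.
  have : (cwt C (y + b))%:R <= (cwt C (y + a))%:R + (cwt C (a + b))%:R :> R.
    by rewrite -natrD ler_nat cwt_triangle.
  by case: (cluster_dichotomy Ga Gb) => // near; move: separated ya yb_far near; lra.
by apply: le_trans ab_far _; rewrite ler_nat subv_F2 cwt_le_wt.
Qed.

Definition balls (l : seq (vec n)) : {set vec n} := \bigcup_(g <- l) ball g.

Lemma ballsP l a : reflect (exists2 g, g \in l & a \in ball g) (a \in balls l).
Proof. by rewrite /balls bigcup_seq; apply: bigcupP. Qed.

Lemma balls_sub l : balls l \subset G.
Proof. by rewrite /balls bigcup_seq; apply/bigcupsP => g _; apply: ball_sub. Qed.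

Lemma balls_far l a b : {subset l <= G} -> a \in balls l -> b \in G :\: balls l ->
  c2 * n%:R <= (wt (a - b))%:R.
Proof.
move=> lG /ballsP [g lg ga]; rewrite in_setD => /andP [nb Gb].
apply: (ball_far (lG _ lg) ga Gb); apply: contra nb => gb.
by apply/ballsP; exists g.
Qed.

(* Greedily adding balls of mass [< 1/50] overshoots [1/50] by less than [1/50]. *)
Lemma balls_mass_window l : {subset l <= G} ->
  (forall g, g \in G -> \sum_(y in ball g) P y < 50%:R^-1) ->
  50%:R^-1 <= \sum_(y in balls l) P y ->
  exists2 l', {subset l' <= G} &
    50%:R^-1 <= \sum_(y in balls l') P y < 2%:R / 50%:R.
Proof.
move=> + small; elim: l => [|g l IHl] lG mass; first by move: mass; rewrite /balls big_nil big_set0; lra.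
have [big_l|small_l] := lerP (50%:R^-1) (\sum_(y in balls l) P y).
  by apply: IHl => // g' lg'; apply: lG; rewrite in_cons lg' orbT.
exists (g :: l) => //; apply/andP; split => //.
have Gg : g \in G by apply: lG; rewrite mem_head.
have := sum_setU_le P_ge0 (ball g) (balls l); rewrite /balls big_cons.
by have := small g Gg; lra.
Qed.

Hypothesis G_mass : 49%:R / 50%:R <= \sum_(y in G) P y.
Hypothesis not_spread : ~ spread (fun y => (P y)%:C%C) (50%:R^-1) c2.

Lemma heavy_ball : exists2 y, y \in G & 50%:R^-1 <= \sum_(a in ball y) P a.
Proof.
have [/exists_inP [y Gy heavy]|/exists_inPn all_light] :=
  boolP [exists y in G, 50%:R^-1 <= \sum_(a in ball y) P a]; first by exists y.
have light g : g \in G -> \sum_(y in ball g) P y < 50%:R^-1.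
  by move=> Gg; rewrite ltNge all_light.
have cover : G \subset balls (enum G).
  by apply/subsetP => g Gg; apply/ballsP; exists g; rewrite ?mem_enum ?ball_center.
have enumG : {subset enum G <= G} by move=> g; rewrite mem_enum.
have cover_mass : 50%:R^-1 <= \sum_(y in balls (enum G)) P y.
  by have := sum_subset_le P_ge0 cover; move: G_mass; lra.
have [l lG /andP [l_mass l_small]] := balls_mass_window enumG light cover_mass.
exfalso; apply: not_spread; apply: (spread_far (S0 := balls l) (S1 := G :\: balls l)) => //.
- by rewrite invr_gt0 ltr0n.
- by move: G_mass l_small; rewrite (big_setID (balls l)) (setIidPr (balls_sub l)) /=; lra.
- by move=> a b; apply: balls_far.
Qed.

Lemma heavy_cluster : exists2 K : {set vec n}, 24%:R / 25%:R < \sum_(y in K) P y &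
  forall a b, a \in K -> b \in K -> (cwt C (a + b))%:R <= r.
Proof.
have [y Gy heavy] := heavy_ball.
exists (ball y); last by move=> a b; apply: ball_close.
have rest_light : \sum_(a in G :\: ball y) P a < 50%:R^-1.
  rewrite ltNge; apply/negP => rest_heavy; apply: not_spread.
  apply: (spread_far (S0 := ball y) (S1 := G :\: ball y)) => // [|a b ya].
    by rewrite invr_gt0 ltr0n.
  by rewrite in_setD => /andP [nb Gb]; apply: ball_far ya Gb nb.
by move: G_mass rest_light; rewrite (big_setID (ball y)) (setIidPr (ball_sub y)) /=; lra.
Qed.

End Cluster.

Lemma sum_sgn2_ge (R : realType) n (P : vec n -> R) (K : {set vec n}) (b : vec n -> 'F_2) :
  (forall y, 0 <= P y) -> \sum_y P y = 1 -> (forall y, y \in K -> b y = 0) ->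
  2%:R * \sum_(y in K) P y - 1 <= \sum_y sgn2 R (b y) * P y.
Proof.
move=> P_ge0 P_sum1 bK0.
rewrite (bigID (fun y => y \in K)) /= in P_sum1.
rewrite [X in _ <= X](bigID (fun y => y \in K)) /=.
have in_K : \sum_(y | y \in K) sgn2 R (b y) * P y = \sum_(y in K) P y.
  by apply: eq_bigr => y Ky; rewrite bK0 // sgn2_0 mul1r.
have out_K : - \sum_(y | y \notin K) P y <= \sum_(y | y \notin K) sgn2 R (b y) * P y.
  by rewrite -sumrN; apply: ler_sum => y _; rewrite -mulN1r ler_wpM2r ?sgn2_geN1.
by move: P_sum1 out_K; rewrite in_K; lra.
Qed.

Section Uncertainty.
Variables (R : realType) (n : nat) (rho : op R n).
Hypothesis rho_state : is_state rho.
Variables (zeta xi : vec n -> 'F_2).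
Local Notation N := ((2 ^ n)%:R : R).
Local Notation rr := (re_op rho).
Local Notation sg := (sgn2 R).

Lemma N_neq0 : N != 0. Proof. by rewrite pnatr_eq0 expn_eq0. Qed.

(* Computational-basis matrix of the X-basis observable [sum_s (-1)^(xi s) |s^><s^|]. *)
Definition obsX (x y : vec n) : R := N^-1 * \sum_s sg (xi s) * sg (dotF2 s (x + y)).

Lemma obsX_sym x y : obsX x y = obsX y x.
Proof. by rewrite /obsX addrC. Qed.

Lemma obsX_sqr y y' : \sum_x obsX x y * obsX x y' = (y == y')%:R.
Proof.
transitivity (\sum_x \sum_s \sum_t N^-1 * N^-1 * (sg (xi s) * sg (xi t) *
   sg (dotF2 s y) * sg (dotF2 t y') * sg (dotF2 x (s + t)))).
  apply: eq_bigr => x _; rewrite /obsX mulrACA mulr_suml mulr_sumr; apply: eq_bigr => s _.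
  rewrite mulr_sumr mulr_sumr; apply: eq_bigr => t _.
  rewrite !dotF2Dr !sgn2D (dotF2C x s) (dotF2C x t); ring.
rewrite exchange_big /=; under eq_bigr do rewrite exchange_big /=.
transitivity (\sum_s \sum_t N^-1 * N^-1 * (sg (xi s) * sg (xi t) *
   sg (dotF2 s y) * sg (dotF2 t y') * ((t == s)%:R * N))).
  apply: eq_bigr => s _; apply: eq_bigr => t _.
  rewrite -(addv_eq0_F2 s t) -(sum_sgn2_dot R (s + t)) !mulr_sumr.
  by apply: eq_bigr => x _; rewrite (dotF2C x).
transitivity (\sum_s N^-1 * sg (dotF2 s (y + y'))).
  apply: eq_bigr => s _.
  rewrite (eq_bigr (fun t => (t == s)%:R * (N^-1 * N^-1 * (sg (xi s) * sg (xi t) *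
     sg (dotF2 s y) * sg (dotF2 t y') * N)))); last by move=> t _; ring.
  rewrite sum_indicator dotF2Dr sgn2D sgn2_sqr mul1r.
  by move: N_neq0; move: (N) => M M_neq0; field.
rewrite -mulr_sumr sum_sgn2_dot addv_eq0_F2 eq_sym.
by move: N_neq0; move: (N) => M M_neq0; field.
Qed.

Lemma expect_obsX : \sum_s sg (xi s) * pX rho s = \sum_y \sum_y' obsX y y' * rr y y'.
Proof.
transitivity (\sum_s \sum_y \sum_y' N^-1 * (sg (xi s) * sg (dotF2 s (y + y')) * rr y y')).
  apply: eq_bigr => s _; rewrite /pX mulrCA !mulr_sumr; apply: eq_bigr => y _.
  rewrite !mulr_sumr; apply: eq_bigr => y' _.
  rewrite dotF2Dr sgn2D (dotF2C s y) (dotF2C s y'); ring.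
rewrite exchange_big /=; apply: eq_bigr => y _; rewrite exchange_big /=; apply: eq_bigr => y' _.
by rewrite /obsX -mulrA mulr_suml mulr_sumr; apply: eq_bigr => s _; ring.
Qed.

Hypothesis anticommute : forall x y, obsX x y != 0 -> sg (zeta x) = - sg (zeta y).

(* [B = 3/2 - Z_zeta - X_xi] has [B^2 = 17/4 - 3 Z_zeta - 3 X_xi] since the two
   observables anticommute, so [0 <= <B^2>] is the claimed bound. *)
Let B (x y : vec n) : R := (3%:R / 2%:R - sg (zeta x)) * (x == y)%:R - obsX x y.

Lemma B_sqr y y' : \sum_x B x y * B x y' =
   ((17%:R / 4%:R) - 3%:R * sg (zeta y)) * (y == y')%:R - 3%:R * obsX y y'.
Proof.
pose c x := 3%:R / 2%:R - sg (zeta x).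
have expand x : B x y * B x y' =
   (x == y)%:R * (c x * c x * (x == y')%:R) - (x == y)%:R * (c x * obsX x y')
   - (x == y')%:R * (c x * obsX x y) + obsX x y * obsX x y'.
  by rewrite /B -/(c x); ring.
transitivity (\sum_x (x == y)%:R * (c x * c x * (x == y')%:R)
  - \sum_x (x == y)%:R * (c x * obsX x y') - \sum_x (x == y')%:R * (c x * obsX x y)
  + \sum_x obsX x y * obsX x y').
  by rewrite -!sumrB -big_split /=; apply: eq_bigr => x _; rewrite expand.
rewrite !sum_indicator obsX_sqr (obsX_sym y' y).
have anti : sg (zeta y) * obsX y y' + obsX y y' * sg (zeta y') = 0.
  have [->|/anticommute ->] := eqVneq (obsX y y') 0; first by rewrite mulr0 mul0r addr0.
  by ring.
apply/eqP; rewrite -subr_eq0; apply/eqP.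
transitivity ((sg (zeta y) * sg (zeta y) - 1) * (y == y')%:R +
   (sg (zeta y) * obsX y y' + obsX y y' * sg (zeta y'))).
  rewrite /c; move: ((y == y')%:R : R) (obsX y y') (sg (zeta y)) (sg (zeta y')) => e X a b.
  by field.
by rewrite sgn2_sqr anti subrr mul0r addr0.
Qed.

Lemma anticommuting_uncertainty :
  \sum_y sg (zeta y) * pZ rho y + \sum_s sg (xi s) * pX rho s <= 17%:R / 12%:R.
Proof.
have B_ge0 : 0 <= \sum_x \sum_y \sum_y' B x y * B x y' * rr y y'.
  by apply: sumr_ge0 => x _; apply: (state_quad_ge0 rho_state (B x)).
have expect_B_sqr : \sum_x \sum_y \sum_y' B x y * B x y' * rr y y' =
   17%:R / 4%:R * \sum_y pZ rho y - 3%:R * \sum_y sg (zeta y) * pZ rho y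
   - 3%:R * \sum_y \sum_y' obsX y y' * rr y y'.
  rewrite exchange_big /=.
  transitivity (\sum_y \sum_y' (((17%:R / 4%:R) - 3%:R * sg (zeta y)) * (y == y')%:R
       - 3%:R * obsX y y') * rr y y').
    apply: eq_bigr => y _; rewrite exchange_big /=; apply: eq_bigr => y' _.
    by rewrite -B_sqr mulr_suml.
  rewrite !mulr_sumr -!sumrB; apply: eq_bigr => y _.
  transitivity (\sum_y' ((y' == y)%:R * ((17%:R / 4%:R - 3%:R * sg (zeta y)) * rr y y'))
     - \sum_y' 3%:R * (obsX y y' * rr y y')).
    by rewrite -sumrB; apply: eq_bigr => y' _; rewrite (eq_sym y' y); ring.
  by rewrite sum_indicator mulr_sumr /pZ; congr (_ - _); ring.
by move: B_ge0; rewrite expect_B_sqr (sum_pZ rho_state) -expect_obsX; lra.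
Qed.

End Uncertainty.

Lemma dimF2S n (A B : {set vec n}) : A \subset B -> (dimF2 A <= dimF2 B)%N.
Proof.
move=> AB; apply: mxrankS; apply/row_subP => i; rewrite rowK.
set x := nth 0 (enum A) i.
have Bx : x \in enum B by rewrite mem_enum (subsetP AB) // -mem_enum mem_nth // -cardE.
have iB : (index x (enum B) < #|B|)%N by rewrite cardE index_mem.
have -> : x = nth 0 (enum B) (Ordinal iB) by rewrite /= nth_index.
by rewrite -(rowK (fun j : 'I_#|B| => nth 0 (enum B) j)); apply: row_sub.
Qed.

Section CSSCode.
Variables (n mX mZ : nat) (HX : 'M['F_2]_(mX, n)) (HZ : 'M['F_2]_(mZ, n)).
Hypothesis css : css_cond HX HZ.

Lemma row_in_dual_kerC m (H : 'M['F_2]_(m, n)) i : row i H \in dual (kerC H).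
Proof. by rewrite inE; apply/forall_inP => c; rewrite kerCP => /eqP Hc; rewrite -syndrome_dot Hc mxE. Qed.

Lemma css_cond_sym : dual (kerC HZ) \subset kerC HX.
Proof.
apply/subsetP => t Ht; rewrite kerCP; apply/eqP/matrixP => i j; rewrite ord1 [RHS]mxE syndrome_dot.
by rewrite dotF2C (dualP Ht) // (subsetP css) // row_in_dual_kerC.
Qed.

Lemma logical_pair : (0 < css_k HX HZ)%N ->
  exists u v, [/\ u \in kerC HX, v \in kerC HZ & dotF2 u v = 1].
Proof.
move=> k_gt0.
have [v Hv Hnv] : exists2 v, v \in kerC HZ & v \notin dual (kerC HX).
  have [sub|/subsetPn [v Hv Hnv]] := boolP (kerC HZ \subset dual (kerC HX)); last by exists v.
  by move: k_gt0; rewrite /css_k subn_gt0 ltnNge dimF2S.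
move: Hnv; rewrite inE => /forall_inPn [u Hu Huv].
by exists u, v; split => //; rewrite dotF2C; case: (F2_cases (dotF2 v u)) Huv => ->.
Qed.

Lemma css_dZ c : c \in kerC HZ -> c \notin dual (kerC HX) -> (css_d HX HZ <= wt c)%N.
Proof. by move=> Zc nc; apply: bigminn_le_cond; rewrite in_setU in_setD Zc nc. Qed.

Lemma css_dX c : c \in kerC HX -> c \notin dual (kerC HZ) -> (css_d HX HZ <= wt c)%N.
Proof. by move=> Xc nc; apply: bigminn_le_cond; rewrite in_setU !in_setD Xc nc orbT. Qed.

End CSSCode.

Section Decoder.
Variables (n m : nat) (H : 'M['F_2]_(m, n)) (K : {set vec n}) (u : vec n).

(* Reads the logical operator [u] off [y] after correcting [y] to a vector of
   [K] with the same syndrome. *)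
Definition decode_obs (y : vec n) : 'F_2 :=
  dotF2 u (y + odflt 0 [pick k in K | k *m H^T == y *m H^T]).

Lemma decode_obs_shift c y : c \in kerC H -> decode_obs (c + y) = dotF2 u c + decode_obs y.
Proof.
rewrite kerCP => /eqP Hc.
by rewrite /decode_obs mulmxDl Hc add0r -dotF2Dr addrA.
Qed.

Lemma decode_obs_cluster (C : {set vec n}) y :
  u \in C -> (forall a b, a \in K -> b \in K -> a + b \in kerC H -> a + b \in dual C) ->
  y \in K -> decode_obs y = 0.
Proof.
move=> Cu decodable Ky; rewrite /decode_obs.
case: pickP => [k /andP [Kk /eqP same]|/(_ y)]; last by rewrite Ky eqxx.
by rewrite dotF2C (dualP _ Cu) // decodable // kerC_syndrome same.
Qed.

End Decoder.

Lemma obsX_eq0 (R : realType) n (xi : vec n -> 'F_2) (v c x y : vec n) :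
  (forall s, xi (c + s) = dotF2 v c + xi s) -> dotF2 c (v + (x + y)) = 1 ->
  obsX R xi x y = 0.
Proof.
move=> xi_shift c_odd; rewrite /obsX.
set S := \sum_s _; suff : S = - S by move=> SN; rewrite (_ : S = 0) ?mulr0 //; move: SN; lra.
rewrite {1}/S (reindex_inj (addrI c)) /= -sumrN; apply: eq_bigr => s _.
have flip : sgn2 R (dotF2 v c) * sgn2 R (dotF2 c (x + y)) = -1.
  by rewrite (dotF2C v) -sgn2D -dotF2Dr c_odd sgn2_1.
rewrite xi_shift dotF2Dl !sgn2D.
move: flip; move: (sgn2 R (dotF2 v c)) (sgn2 R (dotF2 c (x + y))) => a b ab.
by rewrite -mulN1r -ab; ring.
Qed.

Lemma decode_obs_anticommute (R : realType) n mX mZ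
    (HX : 'M['F_2]_(mX, n)) (HZ : 'M['F_2]_(mZ, n)) (KX KZ : {set vec n}) u v :
  css_cond HX HZ -> u \in kerC HX -> v \in kerC HZ -> dotF2 u v = 1 ->
  forall x y, obsX R (decode_obs HX KX v) x y != 0 ->
    sgn2 R (decode_obs HZ KZ u x) = - sgn2 R (decode_obs HZ KZ u y).
Proof.
move=> css Xu Zv uv x y nz.
have dual_vxy : v + (x + y) \in dual (kerC HX).
  rewrite inE; apply/forall_inP => c Xc; apply/eqP.
  case: (F2_cases (dotF2 (v + (x + y)) c)) => // odd; case/eqP: nz.
  apply: (@obsX_eq0 R n _ v c) => [s|]; first by rewrite decode_obs_shift.
  by rewrite dotF2C.
have Zxy : x + y \in kerC HZ.
  by rewrite -[x + y]add0r -(addvv_F2 v) -addrA kerCD // (subsetP css).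
have uxy : dotF2 u (x + y) = 1.
  by rewrite -[x + y]add0r -(addvv_F2 v) -addrA dotF2Dr uv dotF2C (dualP dual_vxy Xu) addr0.
by rewrite -[x](addrK y) subv_F2 decode_obs_shift // uxy sgn2D sgn2_1 mulN1r.
Qed.

Lemma spread_ext (R : realType) n (D D' : vec n -> R[i]) mu delta :
  (forall y, D y = D' y) -> spread D mu delta -> spread D' mu delta.
Proof.
move=> DD' [S0 [S1 [S0_mass [S1_mass far]]]]; exists S0, S1.
by rewrite /prob -!(eq_bigr _ (fun y _ => DD' y)).
Qed.

Lemma decodable_cluster (R : realType) n m m' (H : 'M['F_2]_(m, n)) (H' : 'M['F_2]_(m', n))
    (P : vec n -> R) (c1 c2 t : R) (d : nat) :
  dual (kerC H') \subset kerC H ->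
  (forall c, c \in kerC H -> c \notin dual (kerC H') -> (d <= wt c)%N) ->
  (forall y, 0 <= P y) -> \sum_y P y = 1 -> 0 <= c1 -> 0 < t ->
  syndrome_energy H P <= t / 50%:R ->
  2%:R * (c1 * (2%:R * t) * n%:R) < c2 * n%:R -> c1 * (2%:R * t) * n%:R < d%:R ->
  (forall y, y \in Geps H (2%:R * t) ->
     (cwt (dual (kerC H')) y)%:R <= c1 * (2%:R * t) * n%:R
     \/ c2 * n%:R <= (cwt (dual (kerC H')) y)%:R) ->
  ~ spread (fun y => (P y)%:C%C) (50%:R^-1) c2 ->
  exists2 K : {set vec n}, 24%:R / 25%:R < \sum_(y in K) P y &
    forall a b, a \in K -> b \in K -> a + b \in kerC H -> a + b \in dual (kerC H').
Proof.
move=> css dist P_ge0 P_sum1 c1_ge0 t_gt0 energy_le sep r_lt_d clust not_spread.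
have G_mass := syndrome_markov P_ge0 P_sum1 t_gt0 energy_le.
have [K K_mass K_close] := heavy_cluster (dual0 _) (@dualD _ _) P_ge0 c1_ge0 (ltW t_gt0)
  sep clust G_mass not_spread.
exists K => // a b Ka Kb Hab.
exact: (cwt_lt_dist (dual0 _) (@dualD _ _) css (@kerCD _ _ _) dist r_lt_d Hab (K_close a b Ka Kb)).
Qed.

Lemma scale_choice (R : realType) (n d : nat) (c1 c2 e0 eps : R) :
  0 < c1 -> 0 <= eps ->
  eps < 1000%:R^-1 * Num.min (e0 / 2%:R)
                      (Num.min (c2 / (4%:R * c1)) (d%:R / (2%:R * c1 * n%:R))) ->
  exists2 t : R, 0 < t &
    [/\ 2%:R * eps <= t / 50%:R, 2%:R * t < e0,
        2%:R * (c1 * (2%:R * t) * n%:R) < c2 * n%:R & c1 * (2%:R * t) * n%:R < d%:R].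
Proof.
move=> c1_gt0 eps_ge0; set mu := Num.min _ _ => eps_lt.
have [mu_e0 mu_c2 mu_d] : [/\ mu <= e0 / 2%:R, mu <= c2 / (4%:R * c1)
                            & mu <= d%:R / (2%:R * c1 * n%:R)].
  by have := lexx mu; rewrite {1}/mu !le_min => /andP [-> /andP [-> ->]].
have mu_gt0 : 0 < mu by lra.
have n_gt0 : 0 < n%:R :> R.
  rewrite ltr0n lt0n; apply: contraTneq mu_d => ->; rewrite mulr0 invr0 mulr0; lra.
(* [t] lies between [100 eps] and [mu / 10]. *)
exists (50%:R * eps + mu / 20%:R); first lra.
set t := 50%:R * eps + mu / 20%:R.
have t_lt : t < mu / 10%:R by rewrite /t; lra.
have c1_pos : 0 < 4%:R * c1 by rewrite mulr_gt0 // ltr0n.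
have c1n_pos : 0 < 2%:R * c1 * n%:R by rewrite mulr_gt0 // mulr_gt0 // ltr0n.
have t_c2 : t * (4%:R * c1) < c2.
  rewrite ler_pdivlMr // in mu_c2; apply: lt_le_trans mu_c2.
  by rewrite ltr_pM2r //; lra.
have t_d : t * (2%:R * c1 * n%:R) < d%:R.
  rewrite ler_pdivlMr // in mu_d; apply: lt_le_trans mu_d.
  by rewrite ltr_pM2r //; lra.
split; [by rewrite /t; lra | by lra | | ].
- rewrite (_ : 2%:R * (c1 * (2%:R * t) * n%:R) = t * (4%:R * c1) * n%:R); last by ring.
  by rewrite ltr_pM2r.
- by rewrite (_ : c1 * (2%:R * t) * n%:R = t * (2%:R * c1 * n%:R)); last by ring.
Qed.

Unset Implicit Arguments.

Theorem theorem4p7 (R : realType) (n mX mZ : nat)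
    (HX : 'M['F_2]_(mX, n)) (HZ : 'M['F_2]_(mZ, n))
    (c1 c2 e0 eps : R) (rho : op R n) :
  css_cond HX HZ ->
  (0 < css_k HX HZ)%N ->
  0 < c1 -> 0 < c2 -> 0 < e0 ->
  clustering HX HZ c1 c2 e0 ->
  eps < 1000%:R^-1 * Num.min (e0 / 2%:R)
                      (Num.min (c2 / (4%:R * c1))
                               ((css_d HX HZ)%:R / (2%:R * c1 * n%:R))) ->
  is_state rho ->
  trop (mulop (code_ham R HX HZ) rho) <= (eps%:C)%C ->
  spread (DX rho) (50%:R^-1) c2 \/ spread (DZ rho) (50%:R^-1) c2.
Proof.
move=> css k_gt0 c1_gt0 _ _ clust eps_lt rho_state energy_le.
have [eps_ge0 EX_le EZ_le] := syndrome_energies_le rho_state energy_le.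
have [t t_gt0 [t_eps t_e0 sep r_lt_d]] := scale_choice c1_gt0 eps_ge0 eps_lt.
have two_t_gt0 : 0 < 2%:R * t by rewrite mulr_gt0 ?ltr0n.
have [clustX clustZ] := clust _ two_t_gt0 t_e0.
have [spreadX|notX] := classic (spread (DX rho) (50%:R^-1) c2); first by left.
have [spreadZ|notZ] := classic (spread (DZ rho) (50%:R^-1) c2); first by right.
exfalso.
have [KZ KZ_mass KZ_dec] := decodable_cluster css (@css_dZ _ _ _ HX HZ) (pZ_ge0 rho_state)
  (sum_pZ rho_state) (ltW c1_gt0) t_gt0 (le_trans EZ_le t_eps) sep r_lt_d clustZ
  (fun s => notZ (spread_ext (fun y => esym (DZE rho_state y)) s)).
have [KX KX_mass KX_dec] := decodable_cluster (css_cond_sym css) (@css_dX _ _ _ HX HZ)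
  (pX_ge0 rho_state) (sum_pX rho_state) (ltW c1_gt0) t_gt0 (le_trans EX_le t_eps) sep r_lt_d clustX
  (fun s => notX (spread_ext (fun y => esym (DXE rho_state y)) s)).
have [u [v [Xu Zv uv]]] := logical_pair k_gt0.
have := anticommuting_uncertainty rho_state (decode_obs_anticommute (KX := KX) KZ css Xu Zv uv).
have := sum_sgn2_ge (pZ_ge0 rho_state) (sum_pZ rho_state)
  (fun y => decode_obs_cluster Xu (@KZ_dec)).
have := sum_sgn2_ge (pX_ge0 rho_state) (sum_pX rho_state)
  (fun y => decode_obs_cluster Zv (@KX_dec)).
by move: KX_mass KZ_mass; lra.
Qed.
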